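(* Let $0<\epsilon<1$ and let $a_i = 2i$ for $i\in\{1,\dots,8\}$. Consider the simple one-layer GNN with real parameters $w_2, W_{11}, W_{12}, b_1, b_2$ defined below, and the training inputs $$\mathscr H_{\mathrm{small}}=\{P^{(0)}_1(a_i): i=1,\dots,4\}\cup\{P^{(1)}_2(a_i,0): i=5,\dots,8\}.$$ Suppose that for every $G\in\mathscr H_{\mathrm{small}}$ and every node $u\in V(G)$ we have $|h^{(1)}_u(G)-x_u(\Gamma(G))|<\epsilon/20$. Then: (i) $|w_2W_{11}-1|+|w_2W_{12}-1|<\epsilon$ and $|w_2b_1+b_2|<20\epsilon$; (ii) $w_2\ge 0$, $W_{11}\ge 0$, $W_{12}\ge 0$; (iii) for every $G\in\mathscr G$ and every $v\in V(G)$, $$(1-\epsilon)\,x_v(\Gamma(G))-\epsilon\;\le\; h^{(1)}_v(G)\;\le\;(1+\epsilon)\,x_v(\Gamma(G))+\epsilon .$$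
   Context: Attributed graphs: $G=(V,E,X_{\mathrm v},X_{\mathrm e})$ with $V$ finite, $E$ a set of undirected edges, nonnegative edge weights $x_{(u,v)}=x_{(v,u)}\ge 0$ and nonnegative real node features $x_v$. Every node carries a self-loop of weight $x_{(v,v)}=0$, and the neighbourhood is $\mathcal N(v)=\{v\}\cup\{u:\{u,v\}\in E\}$. A constant $\beta>0$ is fixed (it encodes ''infinite distance''); $\mathscr G$ is the set of attributed graphs with $\sum_{e\in E}x_e<\beta$. For a graph $H$, $x_v(H)$ denotes the feature of node $v$ in $H$. The Bellman–Ford operator $\Gamma$ sends $G$ to the graph $\Gamma(G)$ with the same vertices, edges and edge weights and node features $x'_v=\min\{x_u+x_{(u,v)}:u\in\mathcal N(v)\}$. Shortest-path instances: for a source $s$, $\mathrm d^{(t)}(s,v)$ is the minimal total weight of a walk from $s$ to $v$ with at most $t$ edges, and equals $\beta$ if no such walk exists. $P^{(t)}_k(a_1,\dots,a_k)$ is the path graph with vertices $v_0,\dots,v_k$, edges $\{v_{i-1},v_i\}$ of weight $a_i$, and node features $x_{v_i}=\mathrm d^{(t)}(v_0,v_i)$ (so $x_{v_0}=0$). Simple one-layer GNN: with $\sigma(z)=\max(z,0)$ and parameters $w_2,W_{11},W_{12},b_1,b_2\in\mathbb R$, it outputs at each node $v$ $$h^{(1)}_v(G)=\sigma\Big(w_2\min_{u\in\mathcal N(v)}\sigma\big(W_{11}x_u+W_{12}x_{(u,v)}+b_1\big)+b_2\Big).$$ *)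

From mathcomp Require Import all_boot all_order all_algebra.
Set Implicit Arguments. Unset Strict Implicit. Unset Printing Implicit Defensive.
Import Order.TTheory GRing.Theory Num.Theory.
Local Open Scope ring_scope.

Record graph (R : realFieldType) := Graph {
  V : finType;
  E : {set {set V}};
  xe : {set V} -> R;
  xv : V -> R }.
Arguments Graph {R} V E xe xv.

Section Defs.
Variable R : realFieldType.

(* edge weight x_(u,v); the self-loop (v,v) has weight 0 *)
Definition ew_of (T : finType) (xe : {set T} -> R) (u v : T) : R :=
  if u == v then 0 else xe [set u; v].
Definition ew (G : graph R) (u v : V G) : R := ew_of (@xe R G) u v.

Definition nbhd (G : graph R) (v : V G) : {set V G} :=
  [set u | (u == v) || ([set u; v] \in E G)].

(* minimum of f over N(v) (nonempty since v ∈ N(v)); starting the fold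
   at f v, an element of the set, gives exactly the minimum *)
Definition minN (G : graph R) (v : V G) (f : V G -> R) : R :=
  \big[Num.min/f v]_(u in nbhd v) f u.

Definition attributed (G : graph R) : Prop :=
  [/\ (forall e, e \in E G -> #|e| = 2%N),
      (forall e, e \in E G -> 0 <= @xe R G e) &
      (forall v, 0 <= @xv R G v)].

Definition inGG (beta : R) (G : graph R) : Prop :=
  attributed G /\ \sum_(e in E G) @xe R G e < beta.

Definition Gamma (G : graph R) : graph R :=
  Graph (V G) (E G) (@xe R G) (fun v => minN v (fun u => @xv R G u + ew u v)).

Definition relu (z : R) : R := Num.max z 0.
Definition gnn (w2 W11 W12 b1 b2 : R) (G : graph R) (v : V G) : R :=
  relu (w2 * minN v (fun u => relu (W11 * @xv R G u + W12 * ew u v + b1)) + b2).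

(* Walks: a walk with n edges from s is a sequence p of n vertices with
   consecutive vertices joined by an edge of E; it ends at last s p. *)
Section Walks.
Variables (T : finType) (Ed : {set {set T}}) (xed : {set T} -> R).

Definition walks_upto (t : nat) : seq (seq T) :=
  flatten [seq [seq tval p | p : n.-tuple T] | n <- iota 0 t.+1].

Definition is_walk (s v : T) (p : seq T) : bool :=
  path (fun a b => [set a; b] \in Ed) s p && (last s p == v).

Definition walk_weight (s : T) (p : seq T) : R :=
  \sum_(ab <- zip (s :: p) p) ew_of xed ab.1 ab.2.

(* d^(t)(s,v): minimal weight of a walk from s to v with at most t edges,
   and β if no such walk exists *)
Definition dist (beta : R) (t : nat) (s v : T) : R :=
  let ws := [seq walk_weight s p | p <- walks_upto t & is_walk s v p] in
  if ws is w0 :: _ then \big[Num.min/w0]_(w <- ws) w else beta.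
End Walks.

(* Path graph P^(t)_k(a_1,...,a_k): vertices v_0..v_k (as 'I_k.+1), edges
   {v_(i-1), v_i} with weight a_i (here a is given as a sequence, a_i = nth 0 a (i-1)),
   node features x_(v_i) = d^(t)(v_0, v_i). *)
Definition path_edges (k : nat) : {set {set 'I_k.+1}} :=
  [set [set (inord i : 'I_k.+1); inord i.+1] | i : 'I_k].
Definition path_xe (k : nat) (a : seq R) (e : {set 'I_k.+1}) : R :=
  \sum_(i < k | e == [set (inord i : 'I_k.+1); inord i.+1]) nth 0 a i.
Definition Ppath (beta : R) (t k : nat) (a : seq R) : graph R :=
  Graph 'I_k.+1 (path_edges k) (@path_xe k a)
        (fun i => dist (path_edges k) (@path_xe k a) beta t ord0 i).

Definition Hsmall1 (beta : R) (i : nat) : graph R := Ppath beta 0 1 [:: (2 * i)%:R].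
Definition Hsmall2 (beta : R) (i : nat) : graph R := Ppath beta 1 2 [:: (2 * i)%:R; 0].

Definition fits (eps w2 W11 W12 b1 b2 : R) (G : graph R) : Prop :=
  forall u : V G, `|gnn w2 W11 W12 b1 b2 u - @xv R (Gamma G) u| < eps / 20%:R.
End Defs.

From mathcomp Require Import all_boot all_order all_algebra.
From mathcomp Require Import ring lra zify.
Set Implicit Arguments. Unset Strict Implicit. Unset Printing Implicit Defensive.
Import Order.TTheory GRing.Theory Num.Theory.
Local Open Scope ring_scope.

(* On both families of training paths the end vertex has feature [beta] (it is
   not reachable within [t] steps) and its target is the weight [a = 2i] of the
   last edge, so the GNN output there is
   [relu (w2 * min (relu (W * a + b1)) (relu (W11 * beta + b1)) + b2)], with
   [W = W12] on the first family and [W = W11] on the second.  Each of the two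
   constant values of the inner [min] can fit at most one of four targets spaced
   by 2, so two targets are fitted on the affine branch; two points of the line
   [a |-> w2 W a + (w2 b1 + b2)] pin its slope within [eps/20] of 1 and its
   intercept within [7 eps/20] of 0.  A negative [w2] would put the self-loop
   value at the large input [beta] below the affine value, so [w2 >= 0] and then
   [W11, W12 >= 0].  On an arbitrary graph the GNN pre-activation is then an
   almost-identity affine function of [x_u + x_(u,v) >= 0], and comparing the
   minimisers of the two aggregations over [N(v)] gives the bounds. *)

Section Relu.
Variable R : realFieldType.
Implicit Types x y a d : R.

Lemma relu_ge0 y : 0 <= relu y.
Proof. by rewrite /relu le_max lexx orbT. Qed.

Lemma relu_ge y : y <= relu y.
Proof. by rewrite /relu le_max lexx. Qed.

Lemma relu_id y : 0 <= y -> relu y = y.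
Proof. by move=> y_ge0; rewrite /relu max_l. Qed.

Lemma relu_le x y : x <= y -> 0 <= y -> relu x <= y.
Proof. by move=> le_xy y_ge0; rewrite /relu ge_max le_xy. Qed.

Lemma relu_fit y a d : d <= a -> `|relu y - a| < d -> `|y - a| < d.
Proof.
move=> le_da; case: (lerP 0 y) => [/relu_id -> //|y_lt0].
rewrite /relu max_r ?(ltW y_lt0) // sub0r normrN => /(le_lt_trans (ler_norm a)).
lra.
Qed.

Lemma min_relu_cases x y :
  [\/ Num.min (relu x) (relu y) = 0, Num.min (relu x) (relu y) = relu y
    | Num.min (relu x) (relu y) = x].
Proof.
case: (lerP 0 x) => [x_ge0|x_lt0].
  by case: leP => _; [constructor 3; rewrite relu_id | constructor 2].
by constructor 1; rewrite /relu (max_r (ltW x_lt0)) min_l // relu_ge0.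
Qed.
End Relu.

Lemma pigeonhole_two_of_four (T : Type) (m : nat -> T) (c0 c1 : T) (L : nat -> Prop) n :
  (forall i j, (n < i < j)%N -> (j <= n + 4)%N -> m i <> m j) ->
  (forall i, (n < i <= n + 4)%N -> [\/ m i = c0, m i = c1 | L i]) ->
  exists i j, [/\ (n < i < j)%N, (j <= n + 4)%N, L i & L j].
Proof.
move=> m_inj m_cases.
have [c1' c2' c3' c4'] : [/\ (n < n.+1 <= n + 4), (n < n.+2 <= n + 4),
  (n < n.+3 <= n + 4) & (n < n.+4 <= n + 4)]%N by split; lia.
move: (m_cases _ c1') (m_cases _ c2') (m_cases _ c3') (m_cases _ c4').
clear c1' c2' c3' c4'.
(* In each of the 81 cases either two indices share a constant value or two satisfy [L]. *)
case=> E1; case=> E2; case=> E3; case=> E4;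
  first [ exfalso; (apply: (m_inj n.+1 n.+2) + apply: (m_inj n.+1 n.+3) + apply: (m_inj n.+1 n.+4)
          + apply: (m_inj n.+2 n.+3) + apply: (m_inj n.+2 n.+4) + apply: (m_inj n.+3 n.+4));
          solve [lia | congruence]
        | (exists n.+1, n.+2 + exists n.+1, n.+3 + exists n.+1, n.+4 + exists n.+2, n.+3
           + exists n.+2, n.+4 + exists n.+3, n.+4); split=> //; lia ].
Qed.

Section Neighbourhood.
Variables (R : realFieldType) (G : graph R).
Implicit Types (u v : V G) (f : V G -> R).

Lemma nbhd_self v : v \in nbhd v.
Proof. by rewrite inE eqxx. Qed.

Lemma minN_le v f u : u \in nbhd v -> minN v f <= f u.
Proof. exact: bigmin_le_cond. Qed.

Lemma minN_attained v f : exists2 u, u \in nbhd v & minN v f = f u.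
Proof.
rewrite /minN; elim/big_ind: _ => [|x y [a Ha ->] [b Hb ->]|u Hu].
- by exists v; rewrite ?nbhd_self.
- by case: leP => _; [exists a | exists b].
- by exists u.
Qed.

Lemma minN_pair v a b f : nbhd v = [set a; b] -> minN v f = Num.min (f a) (f b).
Proof.
move=> Nv; apply/eqP; rewrite eq_le le_min !minN_le ?Nv ?set21 ?set22 //=.
have [u + ->] := minN_attained v f.
by rewrite Nv => /set2P [] ->; rewrite ge_min lexx ?orbT.
Qed.

Lemma ew_self v : ew v v = 0.
Proof. by rewrite /ew /ew_of eqxx. Qed.

Lemma ew_ge0 u v : attributed G -> u \in nbhd v -> 0 <= ew u v.
Proof.
case=> _ xe_ge0 _; rewrite /ew /ew_of; case: eqP => // neq_uv.
by rewrite inE => /orP [/eqP //|]; apply: xe_ge0.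
Qed.

Lemma inGG_xe_lt beta e : inGG beta G -> e \in E G -> @xe R G e < beta.
Proof.
case=> [[_ xe_ge0 _] sum_lt] Ee; apply: le_lt_trans sum_lt.
rewrite (bigD1 e) //= lerDl; apply: sumr_ge0 => e' /andP [Ee' _].
exact: xe_ge0.
Qed.

Lemma gnn_ge_b2 w2 W11 W12 b1 b2 v : 0 <= w2 -> b2 <= gnn w2 W11 W12 b1 b2 v.
Proof.
move=> w2_ge0; apply: le_trans (relu_ge _); rewrite lerDr mulr_ge0 //.
by apply: le_bigmin => *; apply: relu_ge0.
Qed.

Lemma xv_Gamma v : @xv R (Gamma G) v = minN v (fun u => @xv R G u + ew u v).
Proof. by []. Qed.

Lemma Gamma_xv_le v : @xv R (Gamma G) v <= @xv R G v.
Proof.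
rewrite xv_Gamma; apply: le_trans (minN_le _ (nbhd_self v)) _.
by rewrite ew_self addr0.
Qed.
End Neighbourhood.

Section Generalization.
Variables (R : realFieldType) (w2 W11 W12 b1 b2 eps : R).
Hypotheses (w2_ge0 : 0 <= w2) (eps_le1 : eps <= 1).
Hypotheses (fit11 : `|w2 * W11 - 1| <= eps) (fit12 : `|w2 * W12 - 1| <= eps).
Hypotheses (fit_b : `|w2 * b1 + b2| <= eps) (b2_le : b2 <= eps).

Lemma affine_bounds x e : 0 <= x -> 0 <= e ->
  (1 - eps) * (x + e) - eps <= w2 * (W11 * x + W12 * e + b1) + b2 /\
  w2 * (W11 * x + W12 * e + b1) + b2 <= (1 + eps) * (x + e) + eps.
Proof.
move=> x_ge0 e_ge0.
have -> : w2 * (W11 * x + W12 * e + b1) + b2 =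
          (w2 * W11) * x + (w2 * W12) * e + (w2 * b1 + b2) by ring.
move: fit11 fit12 fit_b; rewrite !ler_norml => /andP [p1 p2] /andP [q1 q2] /andP [r1 r2].
by split; nra.
Qed.

Lemma gnn_lower (G : graph R) (v : V G) : attributed G ->
  (1 - eps) * @xv R (Gamma G) v - eps <= gnn w2 W11 W12 b1 b2 v.
Proof.
move=> attrG; have [_ _ xv_ge0] := attrG.
rewrite /gnn; set g := fun u => relu _.
have [u Nu ->] := minN_attained v g.
have [low _] := affine_bounds (xv_ge0 u) (ew_ge0 attrG Nu).
apply: le_trans (relu_ge _); apply: le_trans (le_trans _ low) _.
  by rewrite lerD2r ler_wpM2l ?subr_ge0 //; apply: minN_le.
by rewrite lerD2r ler_wpM2l // relu_ge.
Qed.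

Lemma gnn_upper (G : graph R) (v : V G) : attributed G ->
  gnn w2 W11 W12 b1 b2 v <= (1 + eps) * @xv R (Gamma G) v + eps.
Proof.
move=> attrG; have [_ _ xv_ge0] := attrG.
have eps_ge0 : 0 <= eps by apply: le_trans fit_b.
rewrite /gnn xv_Gamma; set g := fun u => relu _; set f := fun u => _ + _.
have [u Nu ->] := minN_attained v f.
have f_ge0 : 0 <= f u by rewrite addr_ge0 ?ew_ge0.
have rhs_ge0 : 0 <= (1 + eps) * f u + eps by rewrite addr_ge0 // mulr_ge0 // addr_ge0.
apply: relu_le rhs_ge0; apply: le_trans (_ : w2 * g u + b2 <= _).
  by rewrite lerD2r ler_wpM2l ?minN_le.
rewrite /g; case: (lerP 0 (W11 * @xv R G u + W12 * ew u v + b1)) => [z_ge0|z_lt0].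
  by rewrite relu_id //; have [_] := affine_bounds (xv_ge0 u) (ew_ge0 attrG Nu).
rewrite /relu max_r ?(ltW z_lt0) // mulr0 add0r.
by apply: (le_trans b2_le); rewrite lerDr mulr_ge0 // addr_ge0.
Qed.
End Generalization.

Section Walks.
Variables (R : realFieldType) (T : finType) (Ed : {set {set T}}) (xed : {set T} -> R).

Lemma mem_walks_upto t (p : seq T) : (p \in walks_upto T t) = (size p <= t)%N.
Proof.
apply/flattenP/idP => [[s /mapP [n]]|le_pt].
  rewrite mem_iota add0n => /andP [_ le_nt] -> /imageP [q _ ->].
  by rewrite size_tuple -ltnS.
exists [seq tval q | q : (size p).-tuple T]; last by apply/imageP; exists (in_tuple p).
by apply/mapP; exists (size p); rewrite ?mem_iota ?add0n ?ltnS.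
Qed.

Lemma dist_const_weight beta t s v c :
  (exists2 p, (size p <= t)%N & is_walk Ed s v p) ->
  (forall p, (size p <= t)%N -> is_walk Ed s v p -> walk_weight xed s p = c) ->
  dist Ed xed beta t s v = c.
Proof.
move=> [p0 p0_le walk_p0] weight_c; rewrite /dist.
set ws := map _ _.
have ws_c : forall w, w \in ws -> w = c.
  move=> w /mapP [p]; rewrite mem_filter mem_walks_upto => /andP [walk_p le_p] ->.
  exact: weight_c.
have : walk_weight xed s p0 \in ws.
  by apply/mapP; exists p0; rewrite // mem_filter mem_walks_upto walk_p0.
case: ws ws_c => [//|w0 ws'] ws_c _; rewrite big_seq.
apply: (big_ind (fun x => x = c)); first by apply: ws_c; rewrite mem_head.
  by move=> x y -> ->; rewrite minxx.
by move=> w /ws_c.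
Qed.

Lemma dist_unreachable beta t s v :
  (forall p, (size p <= t)%N -> ~~ is_walk Ed s v p) -> dist Ed xed beta t s v = beta.
Proof.
move=> no_walk; rewrite /dist.
suff -> : [seq p <- walks_upto T t | is_walk Ed s v p] = [::] by [].
apply/eqP; rewrite -[_ == _]negbK -has_filter; apply/hasPn => p.
by rewrite mem_walks_upto; apply: no_walk.
Qed.
End Walks.

Section PathGraphs.
Variable R : realFieldType.

Lemma path_edgeP k (u v : 'I_k.+1) :
  ([set u; v] \in path_edges k) = ((u.+1 == v :> nat) || (v.+1 == u :> nat)).
Proof.
apply/imsetP/idP => [[i _ /setP uv]|].
  have := uv u; have := uv v; have := uv (inord i); have := uv (inord i.+1).
  have [lt_i lt_Si] : (i < k.+1)%N /\ (i.+1 < k.+1)%N by have := ltn_ord i; lia.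
  rewrite !inE -!val_eqE /= !inordK //; lia.
have inord_val (w : 'I_k.+1) : inord w = w by apply/val_inj; rewrite /= inordK.
case/orP => /eqP succ; [have lt_k := ltn_ord v | have lt_k := ltn_ord u];
  rewrite -succ ltnS in lt_k; exists (Ordinal lt_k) => //=; rewrite succ !inord_val //.
by apply/setP => w; rewrite !inE orbC.
Qed.

Lemma inord0 k : inord 0 = ord0 :> 'I_k.+1.
Proof. by apply/val_inj; rewrite /= inordK. Qed.

Lemma path_xe_edge k (a : seq R) i : (i < k)%N ->
  path_xe a [set (inord i : 'I_k.+1); inord i.+1] = nth 0 a i.
Proof.
move=> lt_ik; rewrite /path_xe (bigD1 (Ordinal lt_ik)) ?eqxx //= big1 ?addr0 //.
move=> j /andP [/eqP /setP ji]; apply: contraNeq => _; apply/eqP/val_inj => /=.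
have lt_jk := ltn_ord j; have := ji (inord i); have := ji (inord i.+1).
by rewrite !inE -!val_eqE /= !inordK; lia.
Qed.

Lemma ew_Ppath beta t k (a : seq R) i : (i < k)%N ->
  @ew R (Ppath beta t k a) (inord i) (inord i.+1) = nth 0 a i.
Proof.
move=> lt_ik; rewrite /ew /ew_of -val_eqE /= !inordK; try lia.
by rewrite ltn_eqF // path_xe_edge.
Qed.

Lemma nbhd_Ppath_last beta t k (a : seq R) :
  nbhd (inord k.+1 : V (Ppath beta t k.+1 a)) = [set inord k; inord k.+1].
Proof.
apply/setP => u; have := ltn_ord u.
by rewrite !inE path_edgeP -!val_eqE /= !inordK; lia.
Qed.
End PathGraphs.

(* The GNN output at the end vertex of either training path: [a] is the weight
   of the last edge and [c] the pre-activation of the self-loop term. *)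
Definition tip_response (R : realFieldType) (w2 W b1 b2 c a : R) : R :=
  relu (w2 * Num.min (relu (W * a + b1)) (relu c) + b2).

Section TrainingGraphs.
Variables (R : realFieldType) (beta : R) (i : nat).

Lemma xv_Hsmall1_root : @xv R (Hsmall1 beta i) (inord 0) = 0.
Proof.
apply: dist_const_weight => [|[|//] _ _]; last by rewrite /walk_weight big_nil.
by exists [::]; rewrite //= /is_walk /= -val_eqE /= inordK.
Qed.

Lemma xv_Hsmall1_tip : @xv R (Hsmall1 beta i) (inord 1) = beta.
Proof. by apply: dist_unreachable => -[|//] _; rewrite /is_walk /= -val_eqE /= inordK. Qed.

Lemma xv_Hsmall2_mid : @xv R (Hsmall2 beta i) (inord 1) = (2 * i)%:R.
Proof.
apply: dist_const_weight => [|[|u [|//]] _].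
- by exists [:: inord 1]; rewrite //= /is_walk /= eqxx path_edgeP /= inordK.
- by rewrite /is_walk /= -val_eqE /= inordK.
rewrite /is_walk /= andbT => /andP [_ /eqP ->].
rewrite /walk_weight /= big_cons big_nil addr0 -inord0.
exact: (@ew_Ppath R beta 1 2 _ 0).
Qed.

Lemma xv_Hsmall2_tip : @xv R (Hsmall2 beta i) (inord 2) = beta.
Proof.
apply: dist_unreachable => -[|u [|//]] _; rewrite /is_walk /=.
  by rewrite -val_eqE /= inordK.
by rewrite andbT path_edgeP; apply/negP => /andP [+ /eqP u2]; rewrite u2 /= inordK.
Qed.

Variables w2 W11 W12 b1 b2 : R.

Lemma gnn_Hsmall1_tip : gnn w2 W11 W12 b1 b2 (inord 1 : V (Hsmall1 beta i)) =
  tip_response w2 W12 b1 b2 (W11 * beta + b1) (2 * i)%:R.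
Proof.
rewrite /gnn (minN_pair _ (nbhd_Ppath_last _ _ _ _)) xv_Hsmall1_root xv_Hsmall1_tip.
by rewrite ew_self (@ew_Ppath R beta 0 1 _ 0) // !mulr0 add0r addr0.
Qed.

Lemma Gamma_Hsmall1_tip :
  @xv R (Gamma (Hsmall1 beta i)) (inord 1) = Num.min (2 * i)%:R beta.
Proof.
rewrite xv_Gamma (minN_pair _ (nbhd_Ppath_last _ _ _ _)) xv_Hsmall1_root xv_Hsmall1_tip.
by rewrite ew_self (@ew_Ppath R beta 0 1 _ 0) // add0r addr0.
Qed.

Lemma gnn_Hsmall2_tip : gnn w2 W11 W12 b1 b2 (inord 2 : V (Hsmall2 beta i)) =
  tip_response w2 W11 b1 b2 (W11 * beta + b1) (2 * i)%:R.
Proof.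
rewrite /gnn (minN_pair _ (nbhd_Ppath_last _ _ _ _)) xv_Hsmall2_mid xv_Hsmall2_tip.
by rewrite ew_self (@ew_Ppath R beta 1 2 _ 1) // !mulr0 !addr0.
Qed.

Lemma Gamma_Hsmall2_tip :
  @xv R (Gamma (Hsmall2 beta i)) (inord 2) = Num.min (2 * i)%:R beta.
Proof.
rewrite xv_Gamma (minN_pair _ (nbhd_Ppath_last _ _ _ _)) xv_Hsmall2_mid xv_Hsmall2_tip.
by rewrite ew_self (@ew_Ppath R beta 1 2 _ 1) // !addr0.
Qed.

Variable eps : R.

Lemma fits_Hsmall1_tip : (2 * i)%:R <= beta -> fits eps w2 W11 W12 b1 b2 (Hsmall1 beta i) ->
  `|tip_response w2 W12 b1 b2 (W11 * beta + b1) (2 * i)%:R - (2 * i)%:R| < eps / 20%:R.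
Proof. by move=> le_beta /(_ (inord 1)); rewrite gnn_Hsmall1_tip Gamma_Hsmall1_tip min_l. Qed.

Lemma fits_Hsmall2_tip : (2 * i)%:R <= beta -> fits eps w2 W11 W12 b1 b2 (Hsmall2 beta i) ->
  `|tip_response w2 W11 b1 b2 (W11 * beta + b1) (2 * i)%:R - (2 * i)%:R| < eps / 20%:R.
Proof. by move=> le_beta /(_ (inord 2)); rewrite gnn_Hsmall2_tip Gamma_Hsmall2_tip min_l. Qed.

Lemma fits_Hsmall1_root : 0 <= w2 -> fits eps w2 W11 W12 b1 b2 (Hsmall1 beta i) ->
  b2 < eps / 20%:R.
Proof.
move=> w2_ge0 /(_ (inord 0)); rewrite ltr_distlC => /andP [fit0 _].
have := Gamma_xv_le (inord 0 : V (Hsmall1 beta i)); rewrite xv_Hsmall1_root.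
have := @gnn_ge_b2 R (Hsmall1 beta i) w2 W11 W12 b1 b2 (inord 0) w2_ge0.
lra.
Qed.
End TrainingGraphs.

Lemma inGG_Hsmall2 (R : realFieldType) (beta : R) i :
  inGG beta (Hsmall2 beta i) -> (2 * i)%:R < beta.
Proof.
have edge01 : [set inord 0; inord 1] \in E (Hsmall2 beta i).
  by rewrite /= path_edgeP !inordK.
by move/inGG_xe_lt/(_ edge01); rewrite /= (@path_xe_edge R 2 _ 0).
Qed.

Lemma tip_fit_two_points (R : realFieldType) (w2 W b1 b2 c d : R) (n : nat) :
  d < 1 ->
  (forall i, (n < i <= n + 4)%N ->
     `|tip_response w2 W b1 b2 c (2 * i)%:R - (2 * i)%:R| < d) ->
  exists i j, [/\ (n < i < j)%N, (j <= n + 4)%N,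
    Num.min (relu (W * (2 * i)%:R + b1)) (relu c) = W * (2 * i)%:R + b1,
    Num.min (relu (W * (2 * j)%:R + b1)) (relu c) = W * (2 * j)%:R + b1 &
    `|(w2 * W) * (2 * i)%:R + (w2 * b1 + b2) - (2 * i)%:R| < d /\
    `|(w2 * W) * (2 * j)%:R + (w2 * b1 + b2) - (2 * j)%:R| < d].
Proof.
move=> d_lt1 tip_fit.
pose m i := Num.min (relu (W * (2 * i)%:R + b1)) (relu c).
have fit_m i : (n < i <= n + 4)%N -> `|w2 * m i + b2 - (2 * i)%:R| < d.
  move=> ni; apply: relu_fit (tip_fit _ ni).
  by apply: (le_trans (ltW d_lt1)); rewrite (ler_nat R 1); lia.
(* one output value cannot be within [d < 1] of two targets that are 2 apart *)
have m_inj i j : (n < i < j)%N -> (j <= n + 4)%N -> m i <> m j.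
  move=> nij jn mij; have := fit_m i; have := fit_m j; rewrite mij.
  have : ((2 * i + 2)%:R <= (2 * j)%:R :> R) by rewrite ler_nat; lia.
  rewrite natrD !ltr_distlC => ij /(_ ltac:(lia)) /andP [? ?] /(_ ltac:(lia)) /andP [? ?].
  lra.
have [i [j [nij jn mi mj]]] := pigeonhole_two_of_four m_inj (fun i _ => min_relu_cases _ _).
have lin_fit k : (n < k <= n + 4)%N -> m k = W * (2 * k)%:R + b1 ->
    `|(w2 * W) * (2 * k)%:R + (w2 * b1 + b2) - (2 * k)%:R| < d.
  by move=> nk mk; have := fit_m k nk; rewrite mk mulrDr mulrA addrA.
by exists i, j; split => //; split; [apply: lin_fit mi | apply: lin_fit mj]; lia.
Qed.

Lemma line_through_two_points (R : realFieldType) (p r d a a' : R) :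
  0 <= a -> a + 2 <= a' -> `|p * a + r - a| < d -> `|p * a' + r - a'| < d ->
  `|p - 1| < d /\ `|r| < (a + 1) * d.
Proof.
move=> a_ge0 gap; rewrite !ltr_norml => /andP [lo hi] /andP [lo' hi'].
have slope : - d < p - 1 < d by apply/andP; split; nra.
by split; last (apply/andP; split); nra.
Qed.

Lemma w2_ge0_of_branch (R : realFieldType) (w2 W11 W12 b1 beta a a' : R) : a < a' ->
  Num.min (relu (W12 * a + b1)) (relu (W11 * beta + b1)) = W12 * a + b1 ->
  Num.min (relu (W12 * a' + b1)) (relu (W11 * beta + b1)) = W12 * a' + b1 ->
  0 < w2 * W12 -> w2 * W12 * a < w2 * W11 * beta -> 0 <= w2.
Proof.
move=> lt_aa' lin lin' pos lt_beta; rewrite leNgt; apply/negP => w2_lt0.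
have W12_lt0 : W12 < 0 by nra.
have lin'_ge0 : 0 <= W12 * a' + b1 by rewrite -lin' le_min !relu_ge0.
have lin_le : W12 * a + b1 <= relu (W11 * beta + b1) by rewrite -lin ge_min lexx orbT.
have lin_gt0 : 0 < W12 * a + b1 by nra.
have : W12 * a + b1 <= W11 * beta + b1.
  case: (lerP 0 (W11 * beta + b1)) => [/relu_id <- //|neg].
  by rewrite /relu max_r ?(ltW neg) in lin_le; lra.
nra.
Qed.

Lemma parameter_estimates (R : realFieldType) (w2 W11 W12 b1 b2 beta d : R) :
  0 < d -> d < 1 / 20%:R -> 16 < beta ->
  (forall i, (0 < i <= 4)%N ->
     `|tip_response w2 W12 b1 b2 (W11 * beta + b1) (2 * i)%:R - (2 * i)%:R| < d) ->
  (forall i, (4 < i <= 8)%N ->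
     `|tip_response w2 W11 b1 b2 (W11 * beta + b1) (2 * i)%:R - (2 * i)%:R| < d) ->
  [/\ `|w2 * W11 - 1| < d, `|w2 * W12 - 1| < d, `|w2 * b1 + b2| < 7%:R * d
    & [/\ 0 <= w2, 0 <= W11 & 0 <= W12]].
Proof.
move=> d_gt0 d_small beta_gt16 fit12 fit11; have d_lt1 : d < 1 by lra.
have [i [j [ij j4 lin_i lin_j [fit_i fit_j]]]] := tip_fit_two_points (n := 0) d_lt1 fit12.
have [k [l [kl l8 _ _ [fit_k fit_l]]]] := tip_fit_two_points (n := 4) d_lt1 fit11.
have [lt_ij le_i3 lt_kl] : [/\ i < j, i <= 3 & k < l]%N by clear -ij j4 kl; split; lia.
have gap m m' : (m < m')%N -> (2 * m)%:R + 2 <= (2 * m')%:R :> R.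
  by move=> lt_mm'; rewrite -natrD ler_nat; clear -lt_mm'; lia.
have [slope12 icpt] := line_through_two_points (ler0n _ _) (gap i j lt_ij) fit_i fit_j.
have [slope11 _] := line_through_two_points (ler0n _ _) (gap k l lt_kl) fit_k fit_l.
have i_le6 : (2 * i)%:R <= 6 :> R by rewrite (ler_nat R _ 6); clear -le_i3; lia.
split => //; first by apply: lt_le_trans icpt _; rewrite ler_wpM2r //; lra.
move: slope12 slope11; rewrite !ltr_norml => /andP [p_lo p_hi] /andP [q_lo q_hi].
have w2_ge0 : 0 <= w2.
  apply: (w2_ge0_of_branch _ lin_i lin_j); [by rewrite ltr_nat; clear -lt_ij; lia | lra |].
  have pa : w2 * W12 * (2 * i)%:R <= 3 / 2 * (2 * i)%:R by rewrite ler_wpM2r //; lra.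
  have qb : 3 / 4 * beta < w2 * W11 * beta by rewrite ltr_pM2r; lra.
  lra.
by clear -d_small p_lo q_lo w2_ge0; split => //; nra.
Qed.

Theorem theorem1 (R : realFieldType) (beta eps w2 W11 W12 b1 b2 : R) :
  0 < beta ->
  (forall i : nat, (1 <= i <= 4)%N -> inGG beta (Hsmall1 beta i)) ->
  (forall i : nat, (5 <= i <= 8)%N -> inGG beta (Hsmall2 beta i)) ->
  0 < eps -> eps < 1 ->
  (forall i : nat, (1 <= i <= 4)%N -> fits eps w2 W11 W12 b1 b2 (Hsmall1 beta i)) ->
  (forall i : nat, (5 <= i <= 8)%N -> fits eps w2 W11 W12 b1 b2 (Hsmall2 beta i)) ->
  [/\ `|w2 * W11 - 1| + `|w2 * W12 - 1| < eps /\ `|w2 * b1 + b2| < 20%:R * eps,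
      [/\ 0 <= w2, 0 <= W11 & 0 <= W12] &
      forall (G : graph R), inGG beta G -> forall v : V G,
        (1 - eps) * @xv R (Gamma G) v - eps <= gnn w2 W11 W12 b1 b2 v /\
        gnn w2 W11 W12 b1 b2 v <= (1 + eps) * @xv R (Gamma G) v + eps].
Proof.
move=> _ _ inGG2 eps_gt0 eps_lt1 fits1 fits2.
have beta_gt16 : 16 < beta := inGG_Hsmall2 (inGG2 8%N isT).
have target_le i : (i <= 8)%N -> (2 * i)%:R <= beta.
  by move=> le_i8; rewrite ltW // (le_lt_trans _ beta_gt16) // (ler_nat R _ 16); lia.
have [slope11 slope12 icpt [w2_ge0 W11_ge0 W12_ge0]] :=
  @parameter_estimates R w2 W11 W12 b1 b2 beta (eps / 20%:R) ltac:(lra) ltac:(lra) beta_gt16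
    (fun i i_range => fits_Hsmall1_tip (target_le i ltac:(lia)) (fits1 i ltac:(lia)))
    (fun i i_range => fits_Hsmall2_tip (target_le i ltac:(lia)) (fits2 i ltac:(lia))).
have b2_lt := fits_Hsmall1_root w2_ge0 (fits1 1%N isT).
have [fit11 fit12 fit_b b2_le] : [/\ `|w2 * W11 - 1| <= eps, `|w2 * W12 - 1| <= eps,
    `|w2 * b1 + b2| <= eps & b2 <= eps] by split; lra.
split; [split; lra | by [] |].
move=> G [attrG _] v; have eps_le1 : eps <= 1 by lra.
by split; [apply: gnn_lower | apply: gnn_upper].
Qed.
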